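(* Let $A$ be a finite set, $n\in\mathbb N$, $\nu\in\Pr(A)$, $\mu\in\Pr(A^n)$, and $\delta:=\overline{d_n}(\mu,\nu^{\times n})$. Then $\mathrm{TC}(\mu)\le2\big(\mathrm H(\delta,1-\delta)+\delta\log|A|\big)n$.
   Context: $\overline{d_n}$ is the transportation metric on $\Pr(A^n)$ associated with the normalized Hamming metric $d_n(\mathbf a,\mathbf a')=|\{i:a_i\ne a'_i\}|/n$: $\overline{d_n}(\mu,\nu)=\inf\{\int d_n\,d\lambda:\lambda\text{ a coupling of }\mu,\nu\}$. $\mathrm{TC}(\mu)=\sum_i\mathrm H(\mu_{\{i\}})-\mathrm H(\mu)$ with $\mu_{\{i\}}$ the marginals; $\mathrm H(\delta,1-\delta)$ is the binary Shannon entropy; logarithms are natural. *)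

From mathcomp Require Import all_boot all_order all_algebra.
From mathcomp Require Import classical_sets reals exp.
Set Implicit Arguments. Unset Strict Implicit. Unset Printing Implicit Defensive.
Import Order.TTheory GRing.Theory Num.Theory.
Local Open Scope ring_scope.

Section Defs.
Variable R : realType.

Definition is_dist (T : finType) (p : {ffun T -> R}) : Prop :=
  (forall x, 0 <= p x) /\ \sum_(x : T) p x = 1.

Definition negxlnx (t : R) : R := if t == 0 then 0 else - (t * ln t).

Definition entropy (T : finType) (p : {ffun T -> R}) : R :=
  \sum_(x : T) negxlnx (p x).

Definition bin_entropy (d : R) : R := negxlnx d + negxlnx (1 - d).

Definition marginal (A : finType) (n : nat) (mu : {ffun {ffun 'I_n -> A} -> R})
  (i : 'I_n) : {ffun A -> R} :=
  [ffun a => \sum_(x : {ffun 'I_n -> A} | x i == a) mu x].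

Definition total_corr (A : finType) (n : nat) (mu : {ffun {ffun 'I_n -> A} -> R}) : R :=
  \sum_(i < n) entropy (marginal mu i) - entropy mu.

Definition prod_dist (A : finType) (n : nat) (nu : {ffun A -> R}) :
  {ffun {ffun 'I_n -> A} -> R} := [ffun x : {ffun 'I_n -> A} => \prod_(i < n) nu (x i)].

Definition hamming_n (A : finType) (n : nat) (a a' : {ffun 'I_n -> A}) : R :=
  (#|[set i : 'I_n | a i != a' i]|)%:R / n%:R.

Definition is_coupling (T : finType) (mu nu : {ffun T -> R})
  (lam : {ffun (T * T) -> R}) : Prop :=
  is_dist lam /\ (forall x, \sum_(y : T) lam (x, y) = mu x)
             /\ (forall y, \sum_(x : T) lam (x, y) = nu y).

Definition dbar_n (A : finType) (n : nat) (mu nu : {ffun {ffun 'I_n -> A} -> R}) : R :=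
  inf [set c | exists lam, is_coupling mu nu lam /\
         c = \sum_(p : {ffun 'I_n -> A} * {ffun 'I_n -> A}) hamming_n p.1 p.2 * lam p].

End Defs.

(* Fix a coupling lam of mu and nu^n and let e_i be the probability under lam
   that the i-th coordinates disagree.  Fano's inequality, proved as a Gibbs
   inequality against the channel that keeps a symbol with probability 1 - e_i
   and otherwise spreads e_i uniformly over A, gives
   H(X_i) <= H(X_i, Y_i) <= H(nu) + F(e_i) with F(e) = H(e, 1 - e) + e log|A|;
   the product of these channels gives likewise
   n H(nu) = H(nu^n) <= H(lam) <= H(mu) + sum_i F(e_i).
   Subtracting, TC(mu) <= 2 sum_i F(e_i) <= 2 n F(mean_i e_i) by concavity of F,
   and mean_i e_i is the expected normalized Hamming distance under lam.  Since
   F has a square-root modulus of continuity, the bound passes to the infimum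
   over couplings even though it need not be attained. *)

From mathcomp Require Import all_boot all_order all_algebra.
From mathcomp Require Import classical_sets reals exp.
From mathcomp Require Import ring lra.
Set Implicit Arguments. Unset Strict Implicit. Unset Printing Implicit Defensive.
Import Order.TTheory GRing.Theory Num.Theory.
Local Open Scope ring_scope.

Section Entropy.
Variable R : realType.

Lemma ln_le_subr1 (x : R) : 0 < x -> ln x <= x - 1.
Proof. by move=> x_gt0; have := expR_ge1Dx (ln x); rewrite lnK ?posrE //; lra. Qed.

Lemma negxlnxE (t : R) : negxlnx t = - (t * ln t).
Proof. by rewrite /negxlnx; case: eqP => [->|]; rewrite ?mul0r ?oppr0. Qed.

Lemma ln_prod (I : Type) (r : seq I) (F : I -> R) :
  (forall i, 0 < F i) -> ln (\prod_(i <- r) F i) = \sum_(i <- r) ln (F i).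
Proof.
move=> F_gt0; elim: r => [|i r IHr]; first by rewrite !big_nil ln1.
by rewrite !big_cons lnM ?posrE ?IHr // prodr_gt0.
Qed.

Definition dist_push (Z U : finType) (f : Z -> U) (p : {ffun Z -> R}) :
  {ffun U -> R} := [ffun u => \sum_(z | f z == u) p z].

Definition prob (Z : finType) (p : {ffun Z -> R}) (E : pred Z) : R :=
  \sum_(z | E z) p z.

Section PairSums.
Variables (X Y : finType).

Lemma sum_pair (F : X * Y -> R) : \sum_z F z = \sum_x \sum_y F (x, y).
Proof. by rewrite pair_bigA; apply: eq_bigr => -[]. Qed.

Lemma sum_fst_eq (F : X * Y -> R) (x : X) : \sum_(z | z.1 == x) F z = \sum_y F (x, y).
Proof.
rewrite big_mkcond sum_pair (bigD1 x) //= [X in _ + X]big1 ?addr0.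
  by apply: eq_bigr => y _; rewrite eqxx.
by move=> x' /negbTE x'_neq; apply: big1 => y _; rewrite /= x'_neq.
Qed.

Lemma sum_snd_eq (F : X * Y -> R) (y : Y) : \sum_(z | z.2 == y) F z = \sum_x F (x, y).
Proof.
rewrite big_mkcond sum_pair; apply: eq_bigr => x _.
by rewrite (bigD1 y) //= eqxx big1 ?addr0 // => y' /negbTE /= ->.
Qed.

End PairSums.

Section Push.
Variables (Z U : finType) (f : Z -> U) (p : {ffun Z -> R}).

Lemma sum_dist_push (F : U -> R) :
  \sum_u dist_push f p u * F u = \sum_z p z * F (f z).
Proof.
rewrite [RHS](partition_big f predT) //=; apply: eq_bigr => u _.
by rewrite ffunE mulr_suml; apply: eq_bigr => z /eqP ->.
Qed.

Lemma le_dist_push (z : Z) : (forall z, 0 <= p z) -> p z <= dist_push f p (f z).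
Proof. by move=> p_ge0; rewrite ffunE (bigD1 z) //= lerDl sumr_ge0. Qed.

Lemma is_dist_push : is_dist p -> is_dist (dist_push f p).
Proof.
move=> [p_ge0 p_sum1]; split=> [u|]; first by rewrite ffunE sumr_ge0.
by rewrite -p_sum1 (partition_big f predT) //=; apply: eq_bigr => u _; rewrite ffunE.
Qed.

Lemma prob_dist_push (E : pred U) : prob (dist_push f p) E = prob p (fun z => E (f z)).
Proof.
rewrite /prob (partition_big f E) //=; apply: eq_bigr => u Eu.
by rewrite ffunE; apply: eq_bigl => z; rewrite andbC; case: eqP => // ->.
Qed.

Lemma dist_push_comp (V : finType) (g : U -> V) :
  dist_push g (dist_push f p) = dist_push (g \o f) p.
Proof.
apply/ffunP => v; rewrite !ffunE /= (partition_big f (fun u => g u == v)) //=.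
apply: eq_bigr => u /eqP <-; rewrite ffunE; apply: eq_bigl => z.
by rewrite andbC; case: eqP => // ->; rewrite eqxx.
Qed.

Lemma entropy_dist_pushE :
  entropy (dist_push f p) = - \sum_z p z * ln (dist_push f p (f z)).
Proof.
rewrite -(sum_dist_push (fun u => ln (dist_push f p u))) -sumrN; apply: eq_bigr => u _; exact: negxlnxE.
Qed.

Lemma entropy_dist_push_le : (forall z, 0 <= p z) -> entropy (dist_push f p) <= entropy p.
Proof.
move=> p_ge0; rewrite entropy_dist_pushE -sumrN; apply: ler_sum => z _.
rewrite negxlnxE lerN2; have [->|pz_neq0] := eqVneq (p z) 0; first by rewrite !mul0r.
have pz_gt0 : 0 < p z by rewrite lt0r pz_neq0 p_ge0.
have pushz_gt0 := lt_le_trans pz_gt0 (le_dist_push z p_ge0).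
by apply: ler_wpM2l; [exact: ltW | rewrite ler_ln ?posrE // le_dist_push].
Qed.

End Push.

Lemma xlny_sub_xlnx_le (x y : R) : 0 <= x -> 0 <= y -> (0 < x -> 0 < y) ->
  x * ln y - x * ln x <= y - x.
Proof.
move=> x_ge0 y_ge0 y_gt0; have [->|x_neq0] := eqVneq x 0; first by rewrite !mul0r subrr subr0.
have x_gt0 : 0 < x by rewrite lt0r x_neq0.
have := ln_le_subr1 (divr_gt0 (y_gt0 x_gt0) x_gt0).
rewrite ln_div ?posrE ?y_gt0 // => /(ler_wpM2l x_ge0).
by rewrite !mulrBr mulr1 mulrCA divff // mulr1.
Qed.

Lemma entropy_le_cross_entropy (Z : finType) (p : {ffun Z -> R}) (q : Z -> R) :
  is_dist p -> (forall z, 0 <= q z) -> \sum_z q z <= 1 ->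
  (forall z, 0 < p z -> 0 < q z) -> entropy p <= - \sum_z p z * ln (q z).
Proof.
move=> [p_ge0 p_sum1] q_ge0 q_sum_le1 q_gt0.
have : \sum_z (p z * ln (q z) - p z * ln (p z)) <= \sum_z (q z - p z).
  by apply: ler_sum => z _; exact: xlny_sub_xlnx_le (p_ge0 z) (q_ge0 z) (@q_gt0 z).
rewrite !sumrB p_sum1 => sum_le.
rewrite /entropy; under eq_bigr do rewrite negxlnxE.
rewrite sumrN; lra.
Qed.

Lemma entropy_le_dist_push_cross_entropy (Z U : finType) (f : Z -> U)
    (p : {ffun Z -> R}) (W : Z -> R) :
  is_dist p -> (forall z, 0 <= W z) -> (forall u, \sum_(z | f z == u) W z <= 1) ->
  (forall z, 0 < p z -> 0 < W z) ->
  entropy p <= entropy (dist_push f p) - \sum_z p z * ln (W z).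
Proof.
move=> p_dist W_ge0 W_sum_le1 W_gt0; have [p_ge0 _] := p_dist.
set P := dist_push f p; have [P_ge0 P_sum1] := is_dist_push f p_dist.
have PW_gt0 z : 0 < p z -> 0 < P (f z) * W z.
  by move=> pz_gt0; rewrite mulr_gt0 ?W_gt0 // (lt_le_trans pz_gt0) ?le_dist_push.
apply: le_trans (entropy_le_cross_entropy (q := fun z => P (f z) * W z) p_dist _ _ PW_gt0) _.
- by move=> z; rewrite mulr_ge0.
- rewrite (partition_big f predT) //= -P_sum1; apply: ler_sum => u _.
  rewrite (eq_bigr (fun z => P u * W z)) => [|z /eqP -> //].
  by rewrite -mulr_sumr -[leRHS]mulr1 ler_wpM2l.
- have ln_PW z : p z * ln (P (f z) * W z) = p z * ln (P (f z)) + p z * ln (W z).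
    have [->|pz_neq0] := eqVneq (p z) 0; first by rewrite !mul0r addr0.
    have pz_gt0 : 0 < p z by rewrite lt0r pz_neq0 p_ge0.
    by rewrite -mulrDr lnM ?posrE ?W_gt0 ?(lt_le_trans pz_gt0) ?le_dist_push.
  by under eq_bigr do rewrite ln_PW; rewrite big_split /= opprD entropy_dist_pushE.
Qed.

Lemma prob_predC (Z : finType) (p : {ffun Z -> R}) (E : pred Z) :
  is_dist p -> prob p (predC E) = 1 - prob p E.
Proof. by move=> [_ p_sum1]; rewrite -p_sum1 (bigID E) /= addrC addrK. Qed.

Lemma prob_ge0 (Z : finType) (p : {ffun Z -> R}) (E : pred Z) :
  is_dist p -> 0 <= prob p E.
Proof. by move=> [p_ge0 _]; rewrite sumr_ge0. Qed.

Lemma prob_le1 (Z : finType) (p : {ffun Z -> R}) (E : pred Z) :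
  is_dist p -> prob p E <= 1.
Proof. by move=> p_dist; rewrite -subr_ge0 -prob_predC ?prob_ge0. Qed.

Lemma dist_card_gt0 (Z : finType) (p : {ffun Z -> R}) : is_dist p -> (0 < #|Z|)%N.
Proof.
move=> [_ p_sum1]; rewrite lt0n; apply: contra_eqN p_sum1 => /eqP/card0_eq Z0.
by rewrite big_pred0 // eq_sym oner_eq0.
Qed.

Definition fano_bound (L e : R) : R := bin_entropy e + e * L.

(* The channel behind Fano's inequality: keep the symbol with probability
   [1 - e], and give weight [e / N] to each other symbol, so that the total
   mass [1 - e / N] is at most one. *)
Definition fano_weight (N e : R) (err : bool) : R := if err then e / N else 1 - e.

Lemma fano_weight_ge0 (N e : R) (err : bool) :
  0 < N -> 0 <= e <= 1 -> 0 <= fano_weight N e err.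
Proof.
move=> N_gt0 /andP[e_ge0 e_le1]; rewrite /fano_weight.
by case: err; rewrite ?divr_ge0 ?subr_ge0 // ltW.
Qed.

Lemma sum_fano_weight_le1 (A : finType) (b : A) (e : R) :
  (0 < #|A|)%N -> 0 <= e ->
  \sum_a fano_weight #|A|%:R e (a != b) <= 1.
Proof.
move=> A_gt0 e_ge0; have N_neq0 : #|A|%:R != 0 :> R by rewrite pnatr_eq0 -lt0n.
have : \sum_(a : A) e / #|A|%:R = e.
  by rewrite sumr_const -[_ *+ _]mulr_natr divfK.
rewrite (bigD1 b) //= => sum_e.
rewrite (bigD1 b) //= eqxx (eq_bigr (fun=> e / #|A|%:R)) => [|a /negbTE -> //].
have : 0 <= e / #|A|%:R by rewrite divr_ge0.
rewrite /fano_weight /=; lra.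
Qed.

Section FanoWeight.
Variables (Z : finType) (p : {ffun Z -> R}) (E : pred Z) (N : R).
Hypotheses (p_dist : is_dist p) (N_gt0 : 0 < N).
Local Notation e := (prob p E).

Lemma fano_weight_gt0 (z : Z) : 0 < p z -> 0 < fano_weight N e (E z).
Proof.
move=> pz_gt0; have [p_ge0 _] := p_dist.
have pz_le z' (F : pred Z) : F z' -> p z' <= prob p F.
  by move=> Fz; rewrite /prob (bigD1 z') //= lerDl sumr_ge0.
rewrite /fano_weight; case: ifP => Ez; last first.
  by rewrite -prob_predC // (lt_le_trans pz_gt0) // pz_le //= Ez.
by rewrite divr_gt0 // (lt_le_trans pz_gt0) ?pz_le.
Qed.

Lemma cross_entropy_fano_weight :
  - \sum_z p z * ln (fano_weight N e (E z)) = fano_bound (ln N) e.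
Proof.
rewrite (bigID E) /= (eq_bigr (fun z => p z * ln (e / N))) => [|z ->] //.
rewrite [X in _ + X](eq_bigr (fun z => p z * ln (1 - e))) => [|z /negbTE -> //].
rewrite -!mulr_suml -/(prob p E) -/(prob p (predC E)) prob_predC //.
rewrite /fano_bound /bin_entropy !negxlnxE; have [->|e_neq0] := eqVneq e 0.
  by rewrite !mul0r; ring.
have e_gt0 : 0 < e by rewrite lt0r e_neq0 prob_ge0.
by rewrite ln_div ?posrE //; ring.
Qed.

End FanoWeight.

Definition prob_mismatch (A : finType) (pi : {ffun A * A -> R}) : R :=
  prob pi (fun z => z.1 != z.2).

Theorem fano_inequality (A : finType) (pi : {ffun A * A -> R}) : is_dist pi ->
  entropy pi <= entropy (dist_push snd pi) + fano_bound (ln #|A|%:R) (prob_mismatch pi).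
Proof.
move=> pi_dist; have A_gt0 : (0 < #|A|)%N.
  by have /card_gt0P[z _] := dist_card_gt0 pi_dist; apply/card_gt0P; exists z.1.
have N_gt0 : 0 < #|A|%:R :> R by rewrite ltr0n.
rewrite -(cross_entropy_fano_weight _ pi_dist N_gt0).
apply: entropy_le_dist_push_cross_entropy => //.
- by move=> z; rewrite fano_weight_ge0 ?prob_ge0 ?prob_le1.
- by move=> b; rewrite sum_snd_eq sum_fano_weight_le1 ?prob_ge0.
- exact: fano_weight_gt0.
Qed.

Lemma marginalE (A : finType) (n : nat) (mu : {ffun {ffun 'I_n -> A} -> R}) (i : 'I_n) :
  marginal mu i = dist_push (fun x : {ffun 'I_n -> A} => x i) mu.
Proof. by []. Qed.

Section ProductDistribution.
Variables (A : finType) (n : nat) (nu : {ffun A -> R}).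
Hypothesis nu_dist : is_dist nu.

Lemma is_dist_prod_dist : is_dist (prod_dist n nu).
Proof.
have [nu_ge0 nu_sum1] := nu_dist; split=> [y|]; first by rewrite ffunE prodr_ge0.
under eq_bigr do rewrite ffunE.
by rewrite -(bigA_distr_bigA (fun _ a => nu a)) /= nu_sum1 big1.
Qed.

Lemma marginal_prod_dist (i : 'I_n) : marginal (prod_dist n nu) i = nu.
Proof.
have [_ nu_sum1] := nu_dist; apply/ffunP => a; rewrite ffunE.
pose Q (j : 'I_n) := [pred b | (j == i) ==> (b == a)].
have Qi f : (f \in family Q) = (f i == a).
  apply/familyP/eqP => [/(_ i)|fia j]; first by rewrite inE eqxx => /eqP.
  by rewrite inE; apply/implyP => /eqP ->; rewrite fia.
under eq_bigr do rewrite ffunE.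
rewrite -(eq_bigl _ _ Qi) -(bigA_distr_big_dep Q (fun _ b => nu b)) (bigD1 i) //=.
rewrite [X in _ * X]big1 => [|j /negbTE ji]; last by rewrite /Q /= ji /= nu_sum1.
by rewrite mulr1 /Q /= eqxx big_pred1_eq.
Qed.

Lemma entropy_prod_dist : entropy (prod_dist n nu) = n%:R * entropy nu.
Proof.
have [nu_ge0 _] := nu_dist; have [P_ge0 _] := is_dist_prod_dist.
set P := prod_dist n nu.
have lnP y : P y * ln (P y) = P y * \sum_i ln (nu (y i)).
  have [->|Py_neq0] := eqVneq (P y) 0; first by rewrite !mul0r.
  rewrite ffunE ln_prod // => i; rewrite lt0r nu_ge0 andbT.
  by apply: contraNneq Py_neq0 => nu0; rewrite ffunE (bigD1 i) //= nu0 mul0r.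
rewrite /entropy; under eq_bigr do rewrite negxlnxE lnP mulr_sumr.
rewrite sumrN exchange_big /= -sumrN.
transitivity (\sum_(i < n) entropy nu); last by rewrite sumr_const card_ord mulr_natl.
apply: eq_bigr => i _.
rewrite -(sum_dist_push (fun y : {ffun 'I_n -> A} => y i) P (fun a => ln (nu a))) -marginalE.
by rewrite marginal_prod_dist /entropy -sumrN; under eq_bigr do rewrite -negxlnxE.
Qed.

End ProductDistribution.

Lemma sum_negxlnx_le (m : nat) (r : 'I_m -> R) : (forall i, 0 <= r i) ->
  \sum_i negxlnx (r i) <= m%:R * negxlnx ((\sum_i r i) / m%:R).
Proof.
case: m r => [|m] r r_ge0; first by rewrite big_ord0 mul0r.
set c := _ / _; have m_neq0 : m.+1%:R != 0 :> R by rewrite pnatr_eq0.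
have mc : m.+1%:R * c = \sum_i r i by rewrite mulrC divfK.
have c_gt0 i : 0 < r i -> 0 < c.
  move=> ri_gt0; rewrite divr_gt0 ?ltr0n // (lt_le_trans ri_gt0) //.
  by rewrite (bigD1 i) //= lerDl sumr_ge0.
have : \sum_i (r i * ln c - r i * ln (r i)) <= \sum_i (c - r i).
  by apply: ler_sum => i _; rewrite xlny_sub_xlnx_le ?divr_ge0 ?sumr_ge0 // => /c_gt0.
rewrite !sumrB sumr_const card_ord -[c *+ _]mulr_natl mc subrr -mulr_suml -mc => gibbs.
rewrite /=; under eq_bigr do rewrite negxlnxE.
rewrite sumrN negxlnxE; lra.
Qed.

Lemma mean_le1 (m : nat) (r : 'I_m -> R) : (forall i, r i <= 1) -> (\sum_i r i) / m%:R <= 1.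
Proof.
case: m r => [|m] r r_le1; first by rewrite big_ord0 mul0r ler01.
rewrite ler_pdivrMr ?ltr0n // mul1r (le_trans (y := \sum_(i < m.+1) 1)) //.
  by apply: ler_sum => i _.
by rewrite sumr_const card_ord.
Qed.

Lemma sum_fano_bound_le (m : nat) (L : R) (r : 'I_m -> R) : (forall i, 0 <= r i <= 1) ->
  \sum_i fano_bound L (r i) <= m%:R * fano_bound L ((\sum_i r i) / m%:R).
Proof.
case: m r => [|m] r r01; first by rewrite big_ord0 mul0r.
have m_neq0 : m.+1%:R != 0 :> R by rewrite pnatr_eq0.
have r_ge0 i : 0 <= r i by case/andP: (r01 i).
have oneBr_ge0 i : 0 <= 1 - r i by rewrite subr_ge0; case/andP: (r01 i).
have := sum_negxlnx_le oneBr_ge0; rewrite sumrB sumr_const card_ord mulrBl divff //.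
have := sum_negxlnx_le r_ge0; rewrite /fano_bound /bin_entropy !big_split /= -mulr_suml.
set c := _ / _; have mc : m.+1%:R * c = \sum_i r i by rewrite mulrC divfK.
rewrite -mc; lra.
Qed.

Lemma sum_hamming_nE (A : finType) (n : nat)
    (lam : {ffun {ffun 'I_n -> A} * {ffun 'I_n -> A} -> R}) :
  \sum_z hamming_n R z.1 z.2 * lam z =
  (\sum_i prob lam (fun z : {ffun 'I_n -> A} * {ffun 'I_n -> A} => z.1 i != z.2 i)) / n%:R.
Proof.
under eq_bigr do rewrite /hamming_n mulrAC.
rewrite -mulr_suml; congr (_ / _).
under [RHS]eq_bigr do rewrite /prob big_mkcond.
rewrite exchange_big /=; apply: eq_bigr => z _.
rewrite -big_mkcond /= (eq_bigl (mem [set i | z.1 i != z.2 i])) ?sumr_const ?mulr_natl //.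
by move=> i /=; rewrite inE.
Qed.

Lemma negxlnxD_le (a b : R) : 0 <= a -> 0 <= b ->
  negxlnx (a + b) <= negxlnx a + negxlnx b.
Proof.
have xlnx_le (x y : R) : 0 <= x -> 0 <= y -> x * ln x <= x * ln (x + y).
  move=> x_ge0 y_ge0; have [->|x_neq0] := eqVneq x 0; first by rewrite !mul0r.
  have x_gt0 : 0 < x by rewrite lt0r x_neq0.
  by rewrite ler_wpM2l // ler_ln ?posrE ?lerDl // ltr_wpDr.
move=> a_ge0 b_ge0; have := xlnx_le a b a_ge0 b_ge0; have := xlnx_le b a b_ge0 a_ge0.
rewrite [b + a]addrC !negxlnxE; lra.
Qed.

Lemma negxlnx_le_addB (a b : R) : 0 <= b <= a -> a <= 1 ->
  negxlnx b <= negxlnx a + (a - b).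
Proof.
move=> /andP[b_ge0 b_le_a] a_le1; have a_ge0 := le_trans b_ge0 b_le_a.
have lna_le0 : ln a <= 0 := ln_le0 a_le1.
have := xlny_sub_xlnx_le b_ge0 a_ge0 (fun b_gt0 => lt_le_trans b_gt0 b_le_a).
have : 0 <= (a - b) * - ln a by rewrite mulr_ge0 ?subr_ge0 ?oppr_ge0.
rewrite !negxlnxE; lra.
Qed.

Lemma negxlnx_le_sqrt (t : R) : 0 <= t -> negxlnx t <= 2 * Num.sqrt t.
Proof.
move=> t_ge0; rewrite negxlnxE; have [->|t_neq0] := eqVneq t 0.
  by rewrite mul0r oppr0 mulr_ge0 ?sqrtr_ge0.
set r := Num.sqrt t; have r_gt0 : 0 < r by rewrite sqrtr_gt0 lt0r t_neq0.
have -> : t = r ^+ 2 by rewrite sqr_sqrtr.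
have : ln r^-1 <= r^-1 - 1 by apply: ln_le_subr1; rewrite invr_gt0.
rewrite lnV ?posrE // => lnr_ge.
have : r ^+ 2 * (1 - r^-1) <= r ^+ 2 * ln r by apply: ler_wpM2l; rewrite ?sqr_ge0 //; lra.
have : 0 <= r * r by rewrite mulr_ge0 ?ltW.
by rewrite lnXn // mulrBr mulr1 expr2 mulfK ?gt_eqF // mulr2n; lra.
Qed.

Lemma fano_bound_le_sqrt (L d c : R) : 0 <= L -> 0 <= d -> d <= c -> c <= 1 ->
  fano_bound L c <= fano_bound L d + (3 + L) * Num.sqrt (c - d).
Proof.
move=> L_ge0 d_ge0 d_le_c c_le1; have cd_ge0 : 0 <= c - d by rewrite subr_ge0.
have := negxlnxD_le d_ge0 cd_ge0; rewrite addrC subrK => negxlnx_c.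
have negxlnx_1Bc : negxlnx (1 - c) <= negxlnx (1 - d) + ((1 - d) - (1 - c)).
  by apply: negxlnx_le_addB; [apply/andP; split | idtac]; lra.
have negxlnx_cBd := negxlnx_le_sqrt cd_ge0.
have sqrt_ge : c - d <= Num.sqrt (c - d).
  have sqrt_le1 : Num.sqrt (c - d) <= 1 by rewrite -sqrtr1 ler_sqrt //; lra.
  by rewrite -{1}(sqr_sqrtr cd_ge0) expr2 ler_piMl ?sqrtr_ge0.
have : (c - d) * L <= Num.sqrt (c - d) * L by apply: ler_wpM2r.
rewrite /fano_bound /bin_entropy; lra.
Qed.

Lemma le_inf_sqrt_modulus (S : set R) (g : R -> R) (x K : R) :
  has_inf S -> 0 <= K -> (forall c, S c -> x <= g c) ->
  (forall c, S c -> g c <= g (inf S) + K * Num.sqrt (c - inf S)) -> x <= g (inf S).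
Proof.
move=> S_inf K_ge0 x_le g_mod; apply/ler_addgt0Pr => e e_gt0.
have K1_gt0 : 0 < K + 1 by lra.
set s := e / (K + 1); have s_gt0 : 0 < s by rewrite divr_gt0.
have es : e = (K + 1) * s by rewrite /s mulrC divfK ?gt_eqF.
have [c Sc c_lt] := inf_adherent (exprn_gt0 2 s_gt0) S_inf.
have inf_le_c : inf S <= c := ge_inf S_inf.2 Sc.
have sqrt_le : Num.sqrt (c - inf S) <= s.
  have : Num.sqrt (c - inf S) <= Num.sqrt (s ^+ 2) by rewrite ler_sqrt ?sqr_ge0 //; lra.
  by rewrite sqrtr_sqr ger0_norm // ltW.
have : K * Num.sqrt (c - inf S) <= K * s by rewrite ler_wpM2l.
have := x_le c Sc; have := g_mod c Sc; lra.
Qed.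

Lemma sum_hamming_n_ge0 (A : finType) (n : nat)
    (lam : {ffun {ffun 'I_n -> A} * {ffun 'I_n -> A} -> R}) :
  is_dist lam -> 0 <= \sum_z hamming_n R z.1 z.2 * lam z.
Proof. by move=> [lam_ge0 _]; rewrite sumr_ge0 // => z _; rewrite mulr_ge0 ?divr_ge0. Qed.

Lemma sum_hamming_n_le1 (A : finType) (n : nat)
    (lam : {ffun {ffun 'I_n -> A} * {ffun 'I_n -> A} -> R}) :
  is_dist lam -> \sum_z hamming_n R z.1 z.2 * lam z <= 1.
Proof. by move=> lam_dist; rewrite sum_hamming_nE mean_le1 // => i; rewrite prob_le1. Qed.

Lemma is_coupling_prod (T : finType) (mu nu : {ffun T -> R}) :
  is_dist mu -> is_dist nu -> is_coupling mu nu [ffun z => mu z.1 * nu z.2].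
Proof.
move=> [mu_ge0 mu_sum1] [nu_ge0 nu_sum1].
have lamX x : \sum_y [ffun z => mu z.1 * nu z.2] (x, y) = mu x.
  by under eq_bigr do rewrite ffunE /=; rewrite -mulr_sumr nu_sum1 mulr1.
split; [split|split=> // y].
- by move=> z; rewrite ffunE mulr_ge0.
- by rewrite sum_pair -mu_sum1; apply: eq_bigr => x _; rewrite lamX.
- by under eq_bigr do rewrite ffunE /=; rewrite -mulr_suml mu_sum1 mul1r.
Qed.

Section CouplingMarginals.
Variables (T : finType) (mu nu : {ffun T -> R}) (lam : {ffun T * T -> R}).
Hypothesis lam_coupling : is_coupling mu nu lam.

Lemma coupling_fst : dist_push fst lam = mu.
Proof. by case: lam_coupling => _ [lamX _]; apply/ffunP => x; rewrite ffunE sum_fst_eq lamX. Qed.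

Lemma coupling_snd : dist_push snd lam = nu.
Proof. by case: lam_coupling => _ [_ lamY]; apply/ffunP => y; rewrite ffunE sum_snd_eq lamY. Qed.

End CouplingMarginals.

Section CouplingWithProduct.
Variables (A : finType) (n : nat) (nu : {ffun A -> R}).
Local Notation T := {ffun 'I_n -> A}.
Variables (mu : {ffun T -> R}) (lam : {ffun T * T -> R}).
Hypotheses (nu_dist : is_dist nu) (lam_coupling : is_coupling mu (prod_dist n nu) lam).
Local Notation N := (#|A|%:R : R).
Local Notation mismatch i := (prob lam (fun z : T * T => z.1 i != z.2 i)).

Let lam_dist : is_dist lam. Proof. by case: lam_coupling. Qed.

Lemma entropy_marginal_le (i : 'I_n) :
  entropy (marginal mu i) <= entropy nu + fano_bound (ln N) (mismatch i).
Proof.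
set pi := dist_push (fun z : T * T => (z.1 i, z.2 i)) lam.
have pi_dist : is_dist pi := is_dist_push _ lam_dist.
have -> : marginal mu i = dist_push fst pi.
  by rewrite marginalE -(coupling_fst lam_coupling) !dist_push_comp.
have -> : nu = dist_push snd pi.
  by rewrite -(marginal_prod_dist nu_dist i) marginalE -(coupling_snd lam_coupling) !dist_push_comp.
have -> : mismatch i = prob_mismatch pi by rewrite /prob_mismatch prob_dist_push.
exact: le_trans (entropy_dist_push_le _ (proj1 pi_dist)) (fano_inequality pi_dist).
Qed.

Lemma entropy_coupling_le :
  entropy lam <= entropy mu + \sum_i fano_bound (ln N) (mismatch i).
Proof.
have N_gt0 : 0 < N by rewrite ltr0n (dist_card_gt0 nu_dist).
have mismatch01 i : 0 <= mismatch i <= 1 by rewrite prob_ge0 ?prob_le1.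
pose w i (z : T * T) := fano_weight N (mismatch i) (z.1 i != z.2 i).
have w_gt0 i z : 0 < lam z -> 0 < w i z by apply: fano_weight_gt0.
have -> : \sum_i fano_bound (ln N) (mismatch i) = - \sum_z lam z * ln (\prod_i w i z).
  rewrite (eq_bigr (fun i => - \sum_z lam z * ln (w i z))) => [|i _]; last first.
    by rewrite cross_entropy_fano_weight.
  rewrite sumrN exchange_big; congr (- _); apply: eq_bigr => z _.
  rewrite -mulr_sumr; have [->|lamz_neq0] := eqVneq (lam z) 0; first by rewrite !mul0r.
  by rewrite ln_prod // => i; apply: w_gt0; rewrite lt0r lamz_neq0 (proj1 lam_dist).
rewrite -(coupling_fst lam_coupling); apply: entropy_le_dist_push_cross_entropy => //.
- by move=> z; rewrite prodr_ge0 // => i _; rewrite fano_weight_ge0.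
- move=> x; rewrite sum_fst_eq /=.
  rewrite -(bigA_distr_bigA (fun i b => fano_weight N (mismatch i) (x i != b))) /=.
  apply: prodr_ile1 => i _; rewrite sumr_ge0 => [|b _]; last by rewrite fano_weight_ge0.
  under eq_bigr do rewrite eq_sym.
  by rewrite sum_fano_weight_le1 ?prob_ge0 ?(dist_card_gt0 nu_dist).
- by move=> z lamz_gt0; rewrite prodr_gt0 // => i _; apply: w_gt0.
Qed.

Lemma total_corr_le_mismatch :
  total_corr mu <= 2 * \sum_i fano_bound (ln N) (mismatch i).
Proof.
have : \sum_i entropy (marginal mu i) <= \sum_i (entropy nu + fano_bound (ln N) (mismatch i)).
  by apply: ler_sum => i _; exact: entropy_marginal_le.
rewrite big_split /= sumr_const card_ord -[entropy nu *+ n]mulr_natl => marginals_le.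
have joint_le : n%:R * entropy nu <= entropy mu + \sum_i fano_bound (ln N) (mismatch i).
  rewrite -(entropy_prod_dist n nu_dist) -(coupling_snd lam_coupling).
  exact: le_trans (entropy_dist_push_le _ (proj1 lam_dist)) entropy_coupling_le.
rewrite /total_corr; lra.
Qed.

Lemma total_corr_le_cost :
  total_corr mu <= 2 * fano_bound (ln N) (\sum_z hamming_n R z.1 z.2 * lam z) * n%:R.
Proof.
rewrite sum_hamming_nE mulrAC -mulrA; apply: le_trans total_corr_le_mismatch _.
by rewrite ler_wpM2l // sum_fano_bound_le // => i; rewrite prob_ge0 ?prob_le1.
Qed.

End CouplingWithProduct.

End Entropy.

Theorem lemma4p4 (R : realType) (A : finType) (n : nat)
  (nu : {ffun A -> R}) (mu : {ffun {ffun 'I_n -> A} -> R}) :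
  is_dist nu -> is_dist mu ->
  let delta := dbar_n mu (prod_dist n nu) in
  total_corr mu <= 2 * (bin_entropy delta + delta * ln (#|A|%:R)) * n%:R.
Proof.
move=> nu_dist mu_dist; rewrite /dbar_n /=.
set S := (X in inf X); set L := ln _.
have L_ge0 : 0 <= L by rewrite ln_ge0 // ler1n (dist_card_gt0 nu_dist).
have S_cost c : S c -> total_corr mu <= 2 * fano_bound L c * n%:R /\ 0 <= c <= 1.
  move=> [lam [lam_coupling ->]]; have [lam_dist _] := lam_coupling.
  by rewrite (total_corr_le_cost nu_dist) // sum_hamming_n_ge0 // sum_hamming_n_le1.
have S_inf : has_inf S.
  split; last by exists 0 => c /S_cost[_ /andP[]].
  by eexists; exists [ffun z => mu z.1 * prod_dist n nu z.2]; split;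
    [exact: is_coupling_prod (is_dist_prod_dist n nu_dist) | reflexivity].
have inf_ge0 : 0 <= inf S by apply: lb_le_inf S_inf.1 _ => c /S_cost[_ /andP[]].
apply: (@le_inf_sqrt_modulus _ S (fun c => 2 * fano_bound L c * n%:R) _ (2 * n%:R * (3 + L))).
- exact: S_inf.
- by rewrite !mulr_ge0 // addr_ge0.
- by move=> c /S_cost[].
move=> c /[dup] Sc /S_cost[_ /andP[_ c_le1]]; have n_ge0 : 0 <= n%:R :> R := ler0n _ n.
have := fano_bound_le_sqrt L_ge0 inf_ge0 (ge_inf S_inf.2 Sc) c_le1.
rewrite /fano_bound; nra.
Qed.
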